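(* For any integer $m>3$: (1) $|V(J'(m,2))|=\binom{m}{2}+m$; (2) $\operatorname{cc}(J'(m,2))=m$; (3) $Z_+(J'(m,2))=\binom{m}{2}$; (4) $Z_+(J'(m,2))=|V(J'(m,2))|-\operatorname{cc}(J'(m,2))$.
   Context: $J'(m,2)$ is the graph whose vertices are all the sets $\{i,j\}$ ($i\ne j$) and $\{i\}$ with $i,j\in\{1,\dots,m\}$, two vertices being adjacent iff the sets have non-empty intersection. $\operatorname{cc}(G)$ is the minimum number of cliques needed to cover all edges of $G$. $Z_+(G)$ is the positive zero forcing number: the minimum size of a set $B$ of initially black vertices such that repeated application of the rule ''let $W_1,\dots,W_k$ be the vertex sets of components of $G$ minus the black vertices; a black vertex $u$ whose only white neighbour in the subgraph induced by $W_i\cup(\text{black vertices})$ is $w$ may turn $w$ black'' eventually makes all vertices black. *)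

From mathcomp Require Import all_boot.
Set Implicit Arguments. Unset Strict Implicit. Unset Printing Implicit Defensive.

Section Generic.
Variables (T : finType) (e : rel T).

Definition is_clique (A : {set T}) : bool :=
  [forall x in A, forall y in A, (x != y) ==> e x y].

Definition edge_clique_cover (F : {set {set T}}) : bool :=
  [forall A in F, is_clique A] &&
  [forall x, forall y, e x y ==> [exists A in F, (x \in A) && (y \in A)]].

Definition cc : nat :=
  \big[minn/#|{set T}|]_(F : {set {set T}} | edge_clique_cover F) #|F|.

Definition white_rel (B : {set T}) : rel T :=
  fun x y => [&& e x y, x \notin B & y \notin B].

Definition can_force (B : {set T}) (u w : T) : bool :=
  [&& u \in B, w \notin B, e u w &
   [forall x, ((x \notin B) && connect (white_rel B) w x && e u x) ==> (x == w)]].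

Definition force_step (B : {set T}) : {set T} :=
  B :|: [set w | [exists u, can_force B u w]].

(* The forcing process is inflationary, so #|T| rounds reach its closure. *)
Definition pzf_set (B : {set T}) : bool :=
  iter #|T| force_step B == [set: T].

Definition Zplus : nat :=
  \big[minn/#|T|]_(B : {set T} | pzf_set B) #|B|.

End Generic.

(* Vertices of J'(m,2): subsets of {1..m} (here 'I_m) of size 1 or 2. *)
Definition Jv (m : nat) : predArgType :=
  {A : {set 'I_m} | (#|A| == 1) || (#|A| == 2)}.

Definition Jadj (m : nat) : rel (Jv m) :=
  fun A B => (A != B) && (val A :&: val B != set0).
Arguments Jadj m : clear implicits.

(* Every positive zero forcing step happens inside a clique of an edge clique
   cover F: if u forces w, then w is the only white vertex of a clique of F
   containing u and w, and that clique becomes entirely black.  Hence one round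
   turns at most as many vertices black as it fills cliques of F, so
   |V| <= |B| + |F| for every positive zero forcing set B.  For J'(m,2) the m
   stars {A | i \in A} form an edge clique cover, and the C(m,2) two-element
   vertices form a positive zero forcing set: the white singletons are pairwise
   non-adjacent, so each is forced by any pair containing it.  As
   |V| = C(m,2) + m, both are optimal. *)
From mathcomp Require Import all_boot zify.
Set Implicit Arguments. Unset Strict Implicit. Unset Printing Implicit Defensive.

Lemma bigmin_attained (I : finType) (P : pred I) (F : I -> nat) x0 i0 k :
  P i0 -> F i0 = k -> k <= x0 -> (forall i, P i -> k <= F i) ->
  \big[minn/x0]_(i | P i) F i = k.
Proof.
move=> Pi0 Fi0 k_le_x0 k_le_F; apply/eqP; rewrite eqn_leq; apply/andP; split.
  rewrite -Fi0; have : i0 \in index_enum I by rewrite mem_index_enum.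
  elim: (index_enum I) => [//|a r IH]; rewrite inE big_cons.
  case/orP => [/eqP <-|i0r]; first by rewrite Pi0 geq_minl.
  by case: (P a); rewrite ?geq_min IH ?orbT.
apply: (big_ind (fun x => k <= x)) => // x y kx ky.
by rewrite leq_min kx ky.
Qed.

Section CliqueCoverForcing.
Variables (T : finType) (e : rel T).

Lemma clique_adj (Q : {set T}) x y :
  is_clique e Q -> x \in Q -> y \in Q -> x != y -> e x y.
Proof.
by move=> /forallP/(_ x)/implyP clQ xQ yQ; move/forallP/(_ y)/implyP: (clQ xQ) => /(_ yQ)/implyP.
Qed.

Lemma force_step_sub (B : {set T}) : B \subset force_step e B.
Proof. exact: subsetUl. Qed.

Lemma pzf_set_force_step (B : {set T}) : force_step e B = [set: T] -> pzf_set e B.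
Proof.
move=> stepB; rewrite /pzf_set; case cardT: #|T| => [|n].
  by apply/eqP/setP => x; have := card0_eq cardT x.
rewrite iterSr stepB; apply/eqP; elim: n {cardT} => //= n ->.
exact: setTU.
Qed.

Variable F : {set {set T}}.
Hypothesis coverF : edge_clique_cover e F.

Definition unfilled_cliques (B : {set T}) : {set {set T}} :=
  [set Q in F | ~~ (Q \subset B)].

Lemma unfilled_cliquesS (B B' : {set T}) :
  B \subset B' -> unfilled_cliques B' \subset unfilled_cliques B.
Proof.
move=> sBB'; apply/subsetP => Q; rewrite !inE => /andP [-> QB'].
by apply: contra QB' => /subset_trans; apply.
Qed.

Lemma forcing_clique (B : {set T}) u w :
  can_force e B u w -> exists2 Q, Q \in F & Q :&: ~: B = [set w].
Proof.
case/and4P => uB wB euw /forallP unique_w.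
case/andP: coverF => /forallP cliques /forallP covers.
have /existsP [Q /and3P [QF uQ wQ]] := implyP (forallP (covers u) w) euw.
have clQ : is_clique e Q by have := implyP (cliques Q) QF.
exists Q => //; apply/setP => x; rewrite !inE.
apply/idP/idP; last by move/eqP ->; rewrite wQ.
case/andP => xQ xB; apply/negPn/negP => xw.
have ux : u != x by apply: contraNneq xB => <-.
have wx : w != x by rewrite eq_sym.
have w_x : connect (white_rel e B) w x.
  by apply: connect1; rewrite /white_rel (clique_adj clQ) ?xB ?wB.
by move: (unique_w x); rewrite xB w_x (clique_adj clQ) //= (negbTE xw).
Qed.

Lemma card_forced_le (B : {set T}) :
  #|force_step e B :\: B| <=
  #|unfilled_cliques B :\: unfilled_cliques (force_step e B)|.
Proof.
set B' := force_step e B.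
rewrite -(card_imset _ set1_inj).
apply: leq_trans (leq_imset_card (fun Q => Q :&: ~: B) _).
apply: subset_leq_card; apply/subsetP => _ /imsetP [w /setDP [wB' wB] ->].
have /existsP [u forces] : [exists u, can_force e B u w].
  by move: wB'; rewrite /B' /force_step inE (negbTE wB) inE.
have [Q QF Qw] := forcing_clique forces.
have wQ : w \in Q by have := set11 w; rewrite -Qw inE => /andP [].
have QB' : Q \subset B'.
  apply/subsetP => x xQ; case xB: (x \in B); first exact: subsetP (force_step_sub B) x xB.
  have : x \in Q :&: ~: B by rewrite !inE xQ xB.
  by rewrite Qw inE => /eqP ->.
apply/imsetP; exists Q => //; rewrite !inE QF QB' /=.
by apply/subsetPn; exists w.
Qed.

Lemma force_step_potential (B : {set T}) :
  #|force_step e B| + #|unfilled_cliques (force_step e B)| <=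
  #|B| + #|unfilled_cliques B|.
Proof.
have sBB' := force_step_sub B.
rewrite -(cardsID B (force_step e B)) (setIidPr sBB').
rewrite -(cardsID (unfilled_cliques (force_step e B)) (unfilled_cliques B)).
rewrite (setIidPr (unfilled_cliquesS sBB')).
have := card_forced_le B; lia.
Qed.

Lemma pzf_card_le (B : {set T}) : pzf_set e B -> #|T| <= #|B| + #|F|.
Proof.
have potential n : #|iter n (force_step e) B| +
    #|unfilled_cliques (iter n (force_step e) B)| <= #|B| + #|unfilled_cliques B|.
  elim: n => //= n IH; exact: leq_trans (force_step_potential _) IH.
move/eqP => all_black; have := potential #|T|; rewrite all_black cardsT.
have : #|unfilled_cliques B| <= #|F|.
  by apply: subset_leq_card; apply/subsetP => Q; rewrite inE => /andP [].
lia.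
Qed.

End CliqueCoverForcing.

Section JPrime.
Variable m : nat.

Lemma card_Jv : #|Jv m| = 'C(m, 2) + m.
Proof.
rewrite card_sub.
have -> : #|[pred A : {set 'I_m} | (#|A| == 1) || (#|A| == 2)]| =
          #|[set A : {set 'I_m} | #|A| == 1] :|: [set A : {set 'I_m} | #|A| == 2]|.
  by apply: eq_card => A; rewrite !inE.
rewrite cardsU !card_draws card_ord bin1.
have -> : [set A : {set 'I_m} | #|A| == 1] :&: [set A : {set 'I_m} | #|A| == 2] = set0.
  by apply/setP => A; rewrite !inE; case/boolP: (#|A| == 1) => [/eqP->|].
by rewrite cards0 subn0 addnC.
Qed.

Lemma Jpoint_subproof (i : 'I_m) : (#|[set i]| == 1) || (#|[set i]| == 2).
Proof. by rewrite cards1. Qed.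

Definition Jpoint (i : 'I_m) : Jv m := Sub [set i] (Jpoint_subproof i).

Definition star (i : 'I_m) : {set Jv m} := [set A : Jv m | i \in val A].

Definition stars : {set {set Jv m}} := [set star i | i : 'I_m].

Lemma card_stars : #|stars| = m.
Proof.
rewrite card_imset ?card_ord // => i j star_ij.
have : Jpoint i \in star j by rewrite -star_ij inE /= set11.
by rewrite inE /= inE => /eqP.
Qed.

Lemma stars_cover : edge_clique_cover (Jadj m) stars.
Proof.
apply/andP; split.
  apply/forallP => Q; apply/implyP => /imsetP [i _ ->].
  apply/forallP => x; apply/implyP; rewrite inE => xi.
  apply/forallP => y; apply/implyP; rewrite inE => yi.
  apply/implyP => xy; rewrite /Jadj xy /=.
  by apply/set0Pn; exists i; rewrite inE xi yi.
apply/forallP => x; apply/forallP => y; apply/implyP => /andP [_ /set0Pn [i]].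
rewrite inE => /andP [xi yi].
by apply/existsP; exists (star i); rewrite imset_f //= !inE xi yi.
Qed.

Definition Jpairs : {set Jv m} := [set A : Jv m | #|val A| == 2].

Lemma card_Jpairs : #|Jpairs| = 'C(m, 2).
Proof.
rewrite -(card_imset _ val_inj) -[m in 'C(m, 2)]card_ord -card_draws.
apply: eq_card => A; rewrite [in RHS]inE; apply/imsetP/idP.
  by case=> x; rewrite inE => /eqP x2 ->; rewrite x2.
move=> A2; have A12 : (#|A| == 1) || (#|A| == 2) by rewrite A2 orbT.
by exists (Sub A A12); rewrite ?inE.
Qed.

Lemma notin_Jpairs (A : Jv m) : A \notin Jpairs -> exists i, val A = [set i].
Proof.
rewrite inE => A_not2; case/orP: (valP A) => [/cards1P //|A2].
by rewrite A2 in A_not2.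
Qed.

Lemma Jpairs_white_rel (A y : Jv m) :
  A \notin Jpairs -> ~~ white_rel (Jadj m) Jpairs A y.
Proof.
move=> A_white; apply/negP; rewrite /white_rel /Jadj => /and3P [/andP [Ay meet] _ y_white].
have [i Ai] := notin_Jpairs A_white; have [j yj] := notin_Jpairs y_white.
case/set0Pn: meet => x; rewrite Ai yj !inE => /andP [/eqP xi /eqP xj].
by move: Ay; rewrite -(inj_eq val_inj) Ai yj -xi -xj eqxx.
Qed.

Lemma force_step_Jpairs : 1 < m -> force_step (Jadj m) Jpairs = [set: Jv m].
Proof.
move=> m_gt1; apply/setP => A; rewrite in_setT /force_step in_setU.
case/boolP: (A \in Jpairs) => //= A_white; rewrite inE.
have [i Ai] := notin_Jpairs A_white.
have /card_gt0P [j] : 0 < #|[set~ i]| by rewrite cardsC1 card_ord; lia.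
rewrite !inE eq_sym => ij.
have ij2 : (#|[set i; j]| == 1) || (#|[set i; j]| == 2) by rewrite cards2 ij orbT.
pose u : Jv m := Sub [set i; j] ij2.
have u_black : u \in Jpairs by rewrite inE /= cards2 ij.
apply/existsP; exists u.
have uA : u != A by apply: contraNneq A_white => <-.
rewrite /can_force u_black A_white /Jadj uA /=; apply/andP; split.
  by apply/set0Pn; exists i; rewrite Ai !inE eqxx.
(* [A] is isolated among the white vertices, so its component is [A] itself. *)
apply/forallP => x; apply/implyP => /andP [/andP [_ /connectP [[|y p] /= path_p ->]] _] //.
by case/andP: path_p => Ay _; move: (Jpairs_white_rel y A_white); rewrite Ay.
Qed.

End JPrime.

Theorem mainTheorem14 (m : nat) (hm : 3 < m) :
  [/\ #|Jv m| = 'C(m, 2) + m,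
      cc (Jadj m) = m,
      Zplus (Jadj m) = 'C(m, 2) &
      Zplus (Jadj m) = #|Jv m| - cc (Jadj m)].
Proof.
have pzf_Jpairs : pzf_set (Jadj m) (Jpairs m).
  by apply: pzf_set_force_step; apply: force_step_Jpairs; lia.
have Z_eq : Zplus (Jadj m) = 'C(m, 2).
  apply: bigmin_attained pzf_Jpairs (card_Jpairs m) _ _; first by rewrite card_Jv leq_addr.
  by move=> B /(pzf_card_le (stars_cover m)); rewrite card_Jv card_stars; lia.
have cc_eq : cc (Jadj m) = m.
  apply: bigmin_attained (stars_cover m) (card_stars m) _ _.
    by rewrite -{1}(card_stars m) max_card.
  by move=> F /pzf_card_le/(_ _ pzf_Jpairs); rewrite card_Jv card_Jpairs; lia.
split=> //; first exact: card_Jv.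
by rewrite Z_eq cc_eq card_Jv; lia.
Qed.
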